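(* Let $m,n,p$ be positive integers, $R$ a real $m\times n$ matrix, $K$ a real $p\times n$ matrix and $v\in\mathbb{R}^n$, and assume $\{y\in\mathbb{R}^n:Ky\ge0,\ Ry=0,\ v\cdot y\le0\}=\{0\}$. Let $\pi\in\mathbb{R}^m$ and $\kappa\in\mathbb{R}^p$ satisfy $v'=\pi'R+\kappa'K$. Let $\mathcal{M}=\{a\in\mathbb{R}^m:a'R=b'K\text{ for some }b\in\mathbb{R}^p\}$, suppose $d=\dim\mathcal{M}>0$, let $M$ be a $d\times m$ matrix whose rows form a basis of $\mathcal{M}$, and let $G$ be a $d\times p$ matrix with $MR=GK$. Let $\mathcal{U}=\mathcal{K}\cap\mathbb{R}^p_+$, where $\mathcal{K}$ is the range of $K$. Then $\{u\in\mathcal{U}:Gu=0\text{ and }\kappa\cdot u\le0\}=\{0\}$.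
   Context: Vector inequalities such as $Ky\ge0$ are componentwise; $\mathbb{R}^p_+$ is the nonnegative orthant. *)

From mathcomp Require Import all_boot all_order all_algebra.
Set Implicit Arguments. Unset Strict Implicit. Unset Printing Implicit Defensive.
Import Order.TTheory GRing.Theory Num.Theory.
Local Open Scope ring_scope.

(* Vectors of R^k are column vectors 'cV_k; u' is u^T.
   Componentwise nonnegativity of a column vector. *)
Definition nonneg_cv (F : realFieldType) (k : nat) (u : 'cV[F]_k) : Prop :=
  forall i : 'I_k, 0 <= u i 0.

Definition dotcv (F : realFieldType) (k : nat) (x y : 'cV[F]_k) : F :=
  (x^T *m y) 0 0.

From mathcomp Require Import all_boot all_order all_algebra.
Import Order.TTheory GRing.Theory Num.Theory.
Local Open Scope ring_scope.

(* Write L for the column space of R restricted to ker K. Its orthogonal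
   complement is the set of a with a'R in the row space of K, i.e. the span of
   the rows of M; since M R y = G K y = G u = 0, the vector R y lies in
   L = (span M)^perp and hence R y = R z with K z = 0.  Then y - z is in the
   cone of the hypothesis: K (y - z) = u >= 0, R (y - z) = 0 and
   v.(y - z) = pi'R(y - z) + kappa'K(y - z) = kappa.u <= 0, so y = z and
   u = K z = 0. *)

Section OrthogonalComplement.
Context {F : fieldType}.

Lemma kermx_trK {p n} (B : 'M[F]_(p, n)) : (kermx (kermx B^T)^T :=: B)%MS.
Proof.
have sBkk : (B <= kermx (kermx B^T)^T)%MS.
  by apply/sub_kermxP/trmx_inj; rewrite trmx_mul trmxK mulmx_ker trmx0.
apply/eqmx_sym/eqmxP; rewrite -(mxrank_leqif_eq sBkk).
by rewrite !(mxrank_ker, mxrank_tr) subKn ?rank_leq_col.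
Qed.

Lemma sub_orthoP {k p n} (C : 'M[F]_(k, n)) (B : 'M[F]_(p, n)) :
  reflect (C *m (kermx B^T)^T = 0) (C <= B)%MS.
Proof. by rewrite -(kermx_trK B); apply: sub_kermxP. Qed.

Lemma image_kernel_of_annihilated {m n p d}
    {R : 'M[F]_(m, n)} {K : 'M[F]_(p, n)} {M : 'M[F]_(d, m)} :
    (forall a : 'rV_m, (a *m R <= K)%MS -> (a <= M)%MS) ->
  forall x : 'cV_m, M *m x = 0 -> exists2 z : 'cV_n, K *m z = 0 & R *m z = x.
Proof.
move=> sub_M x Mx0; pose S := kermx K^T *m R^T.
have S_tr : S^T = R *m (kermx K^T)^T by rewrite trmx_mul trmxK.
have kerS_M : (kermx S^T <= M)%MS.
  apply/row_subP => i; apply: sub_M; apply/sub_orthoP.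
  by rewrite -mulmxA -S_tr -row_mul mulmx_ker row0.
have /submxP[D xD] : (x^T <= S)%MS.
  apply/sub_orthoP/trmx_inj; rewrite trmx_mul !trmxK trmx0.
  by case/submxP: kerS_M => E ->; rewrite -mulmxA Mx0 mulmx0.
exists (D *m kermx K^T)^T; apply: trmx_inj.
  by rewrite trmx_mul trmxK -mulmxA mulmx_ker mulmx0 trmx0.
by rewrite trmx_mul trmxK xD -mulmxA.
Qed.

End OrthogonalComplement.

Theorem lemma3p1 (F : realFieldType) (m n p : nat)
  (hm : (0 < m)%N) (hn : (0 < n)%N) (hp : (0 < p)%N)
  (R : 'M[F]_(m, n)) (K : 'M[F]_(p, n)) (v : 'cV[F]_n)
  (hyp : forall y : 'cV[F]_n,
     (nonneg_cv (K *m y) /\ R *m y = 0 /\ dotcv v y <= 0) <-> y = 0)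
  (pi : 'cV[F]_m) (kappa : 'cV[F]_p)
  (hv : v^T = pi^T *m R + kappa^T *m K)
  (d : nat) (hd : (0 < d)%N) (M : 'M[F]_(d, m))
  (hMfree : row_free M)
  (hMspan : forall a : 'cV[F]_m,
     (a^T <= M)%MS <-> exists b : 'cV[F]_p, a^T *m R = b^T *m K)
  (G : 'M[F]_(d, p)) (hG : M *m R = G *m K) :
  forall u : 'cV[F]_p,
    ((exists y : 'cV[F]_n, u = K *m y) /\ nonneg_cv u /\
     G *m u = 0 /\ dotcv kappa u <= 0) <-> u = 0.
Proof.
move=> u; split=> [[[y ->] [Ky_ge0 [GKy0 kappa_Ky]]] | ->]; last first.
  do !split; first by exists 0; rewrite mulmx0.
  - by move=> i; rewrite mxE.
  - by rewrite mulmx0.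
  - by rewrite /dotcv mulmx0 mxE.
have sub_M (a : 'rV_m) : (a *m R <= K)%MS -> (a <= M)%MS.
  case/submxP=> D aRD; rewrite -[a]trmxK; apply/hMspan.
  by exists D^T; rewrite !trmxK.
have MRy0 : M *m (R *m y) = 0 by rewrite mulmxA hG -mulmxA.
have [z Kz0 Rz] := image_kernel_of_annihilated sub_M _ MRy0.
have Kyz : K *m (y - z) = K *m y by rewrite mulmxBr Kz0 subr0.
have Ryz : R *m (y - z) = 0 by rewrite mulmxBr Rz subrr.
have /hyp yz0 : nonneg_cv (K *m (y - z)) /\ R *m (y - z) = 0 /\ dotcv v (y - z) <= 0.
  by rewrite /dotcv hv mulmxDl -!mulmxA Kyz Ryz mulmx0 add0r.
by rewrite -Kyz yz0 mulmx0.
Qed.
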